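(* Let $\beta_1,\dots,\beta_d$, $\bar{\mu}$, $\lambda$ and $R_n$ be as in the context, and assume $\lambda<\frac{4}{|\beta_1\cdots\beta_d|}$. Then $\bar{\mu}(R_n)$ grows exponentially in $n$, i.e. there exist $c>0$ and $\rho>1$ such that $\bar{\mu}(R_n)\ge c\rho^n$ for all $n\in\mathbb{N}$.
   Context: Let $\beta\in(1,2)$ be an algebraic integer none of whose Galois conjugates has modulus $1$. List all its Galois conjugates (both members of each complex-conjugate pair) as $\beta=\beta_1,\dots,\beta_d,\beta_{d+1},\dots,\beta_{d+s},\beta_{d+s+1}$, where $|\beta_1|,\dots,|\beta_d|>1$, $|\beta_{d+1}|,\dots,|\beta_{d+s}|<1$, and $\beta_{d+s+1}$ is real with $|\beta_{d+s+1}|>1$. For $z\in\mathbb{C}$ let $\mathbb{F}_z=\mathbb{R}$ if $z\in\mathbb{R}$ and $\mathbb{C}$ otherwise; let $\bar{\mathbb{K}}=\prod_{j=1}^{d+s+1}\mathbb{F}_{\beta_j}$ and $\bar{\beta}^n=(\beta_1^n,\dots,\beta_{d+s+1}^n)$. Let $\pi_e(x)=(x_1,\dots,x_d)$ and $\pi_{free}(x)=x_{d+s+1}$. For $j\le d$ let $I_{\beta_j}=[-\frac{1}{\beta_j-1},\frac{1}{\beta_j-1}]$ if $\beta_j>1$, $I_{\beta_j}=\{x\in\mathbb{R}:|x|\le\frac{2}{|\beta_j|-1}\}$ if $\beta_j<-1$, $I_{\beta_j}=\{z\in\mathbb{C}:|z|\le\frac{2}{|\beta_j|-1}\}$ if $\beta_j\notin\mathbb{R}$;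 $I=\prod_{j\le d}I_{\beta_j}$ and $S=\{x\in\bar{\mathbb{K}}:\pi_e(x)\in I\}$. Let $\bar{X}=\{\sum_{i=1}^n a_i\bar{\beta}^{n-i}:n\in\mathbb{N},a_i\in\{-1,0,1\}\}\cap S$. For $n\ge1$ and $x\in S$ let $\bar{\mu}_n(\{x\})=\#\{(a,b)\in\{0,1\}^n\times\{0,1\}^n:\sum_{i=1}^n(a_i-b_i)\bar{\beta}^{n-i}=x\}$. It is known (from earlier work of the authors) that there exist $\lambda>1$ and $f:\bar{X}\to(0,\infty)$ with $\lambda^{-n}\bar{\mu}_n(\{x\})\to f(x)$ for every $x\in\bar{X}$, and that $0<f(x)\le f(0)$; let $\bar{\mu}=\sum_{x\in\bar{X}}f(x)\delta_x$. For $n\ge0$ let $R_n=\{x\in\bar{X}:|\pi_{free}(x)|\le\sum_{i=0}^{n-1}|\beta_{d+s+1}|^i\}$. *)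

From mathcomp Require Import all_boot all_order all_algebra.
From mathcomp Require Import complex.
From mathcomp Require Import all_classical all_reals all_analysis.
Set Implicit Arguments. Unset Strict Implicit. Unset Printing Implicit Defensive.
Import Order.TTheory GRing.Theory Num.Theory.
Local Open Scope ring_scope.

Section Defs.
Variable R : realType.
(* number of conjugates: N = d + s + 1 *)
Definition cabs (z : R[i]) : R := complex.Re `|z|.

Variables (N : nat) (b : 'I_N -> R[i]).

(* points of \bar K, coordinatewise embedding; coordinate j corresponds to beta_j *)
Definition Kpt := {ffun 'I_N -> R[i]}.

Definition digit_vec (a : seq int) : Kpt :=
  [ffun j => \sum_(k < size a) (a`_k)%:~R * b j ^+ (size a - k.+1)].

(* radius of I_{beta_j} for an expanding conjugate beta_j *)
Definition Ibound (z : R[i]) : R :=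
  if complex.Im z == 0 then
    (if 1 < complex.Re z then (complex.Re z - 1)^-1 else 2 / (`|complex.Re z| - 1))
  else 2 / (cabs z - 1).

(* S = { x : pi_e(x) \in I } ; the expanding coordinates are those j < d *)
Definition inS (d : nat) (x : Kpt) : Prop :=
  forall j : 'I_N, (j < d)%N -> cabs (x j) <= Ibound (b j).

Definition inX (d : nat) (x : Kpt) : Prop :=
  (exists a : seq int, all (fun t => t \in [:: -1; 0; 1]) a /\ digit_vec a = x)
  /\ inS d x.

Definition mu (n : nat) (x : Kpt) : nat :=
  #|[set p : n.-tuple bool * n.-tuple bool |
      digit_vec [seq (nat_of_bool t.1)%:Z - (nat_of_bool t.2)%:Z | t <- zip p.1 p.2]
      == x]|.

Definition Rset (d : nat) (fr : 'I_N) (n : nat) : set Kpt :=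
  [set x | inX d x /\ cabs (x fr) <= \sum_(k < n) cabs (b fr) ^+ k].

End Defs.

(* Concatenating a pair of digit words representing 0 with one representing x
   gives mu_(m+n)(x) >= mu_m(0) mu_n(x); dividing by lam^(m+n) and letting m go
   to infinity yields f(x) >= lam^-n mu_n(x) f(0).  Summing over the points
   sum_i (a_i - a'_i) beta^(n-i) that lie in S, all of which lie in R_n, gives
   mu(R_n) >= lam^-n f(0) G_n, where G_n counts the pairs (a, a') of 0-1 words
   of length n whose difference lands in S.  Sort the 2^n words into cells
   according to the rounded values of their expanding coordinates: two words of
   the same cell differ by a point of S, so by Cauchy-Schwarz
   G_n >= 4^n / #cells.  Each expanding conjugate needs only O(|beta_j|^n)
   cells, hence #cells = O(|beta_1 ... beta_d|^n) and
   mu(R_n) >= c (4 / (lam |beta_1 ... beta_d|))^n. *)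

From mathcomp Require Import all_boot all_order all_algebra.
From mathcomp Require Import complex.
From mathcomp Require Import all_classical all_reals all_analysis.
From mathcomp Require Import ring lra zify.
Import Order.TTheory GRing.Theory Num.Theory.
Set Implicit Arguments. Unset Strict Implicit. Unset Printing Implicit Defensive.
Import numFieldNormedType.Exports.
Local Open Scope ring_scope.

Section ComplexModulus.
Variable R : realType.
Implicit Types z w : R[i].

Lemma cabsE z : `|z| = (cabs z)%:C%C.
Proof. by rewrite /cabs normc_def. Qed.

Lemma cabs_def z : cabs z = Num.sqrt (complex.Re z ^+ 2 + complex.Im z ^+ 2).
Proof. by rewrite /cabs normc_def. Qed.

Lemma cabs_ge0 z : 0 <= cabs z.
Proof. by rewrite cabs_def sqrtr_ge0. Qed.

Lemma cabsM z w : cabs (z * w) = cabs z * cabs w.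
Proof. by have := normrM z w; rewrite !cabsE -rmorphM => -[]. Qed.

Lemma cabsX z n : cabs (z ^+ n) = cabs z ^+ n.
Proof. by have := normrX n z; rewrite !cabsE -rmorphXn => -[]. Qed.

Lemma cabs_prod (I : finType) (P : pred I) (F : I -> R[i]) :
  cabs (\prod_(i | P i) F i) = \prod_(i | P i) cabs (F i).
Proof. by apply: (big_morph _ cabsM); rewrite /cabs normr1. Qed.

Lemma cabs_sum (I : Type) (r : seq I) (P : pred I) (F : I -> R[i]) :
  cabs (\sum_(i <- r | P i) F i) <= \sum_(i <- r | P i) cabs (F i).
Proof.
have := ler_norm_sum r F P.
by rewrite cabsE (eq_bigr _ (fun i _ => cabsE (F i))) -rmorph_sum lecR.
Qed.

Lemma cabs_int (k : int) : cabs (k%:~R : R[i]) = `|k|%:~R.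
Proof.
have -> : (k%:~R : R[i]) = ((k%:~R : R)%:C)%C by rewrite rmorph_int.
by rewrite cabs_def /= expr0n addr0 sqrtr_sqr -intr_norm.
Qed.

Lemma cabs_conj z : cabs (z^*)%C = cabs z.
Proof. by have := normcJ z; rewrite !cabsE => -[]. Qed.

Lemma cabs_Im0 z : complex.Im z = 0 -> cabs z = `|complex.Re z|.
Proof. by move=> z0; rewrite cabs_def z0 expr0n addr0 sqrtr_sqr. Qed.

Lemma cabs_le_ReIm z : cabs z <= `|complex.Re z| + `|complex.Im z|.
Proof.
rewrite cabs_def -[X in _ <= X]ger0_norm ?addr_ge0 // -sqrtr_sqr ler_wsqrtr //.
by rewrite sqrrD !real_normK ?num_real // addrAC lerDl mulrn_wge0 // mulr_ge0.
Qed.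

Lemma Im_eq0_conj z : (z^*)%C = z -> complex.Im z = 0.
Proof. by case: z => a c [] /= cN; lra. Qed.

Lemma Ibound_gt0 z : 1 < cabs z -> 0 < Ibound z.
Proof.
move=> z1; rewrite /Ibound; case: eqP => [z0|_]; last by rewrite divr_gt0 ?subr_gt0.
case: ifP => [Re1|_]; first by rewrite invr_gt0 subr_gt0.
by rewrite divr_gt0 // subr_gt0 -cabs_Im0.
Qed.

Lemma Ibound_conj z : Ibound (z^*)%C = Ibound z.
Proof. by case: z => a c; rewrite /Ibound cabs_conj /= oppr_eq0. Qed.

End ComplexModulus.

Section DigitsEval.
Variable R : realType.
Implicit Types (s : seq int) (z : R[i]).

Definition digits_eval s z : R[i] :=
  \sum_(k < size s) (s`_k)%:~R * z ^+ (size s - k.+1).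

Lemma digit_vecE N (b : 'I_N -> R[i]) s j : digit_vec b s j = digits_eval s (b j).
Proof. by rewrite ffunE. Qed.

Lemma digits_eval_cat s (t : seq int) z :
  digits_eval (s ++ t) z = digits_eval s z * z ^+ size t + digits_eval t z.
Proof.
rewrite /digits_eval size_cat big_split_ord /= mulr_suml; congr (_ + _).
  apply: eq_bigr => k _; rewrite nth_cat ltn_ord -mulrA -exprD.
  by congr (_ * _ ^+ _); have := ltn_ord k; lia.
apply: eq_bigr => k _; rewrite nth_cat ltnNge leq_addr /= addKn.
by congr (_ * _ ^+ _); lia.
Qed.

Lemma digits_eval_conj s z : digits_eval s (z^*)%C = ((digits_eval s z)^*)%C.
Proof.
rewrite rmorph_sum; apply: eq_bigr => k _.
by rewrite rmorphM rmorphXn rmorph_int.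
Qed.

Lemma cabs_digits_eval_le s z : all (fun a : int => `|a| <= 1) s ->
  cabs (digits_eval s z) <= \sum_(k < size s) cabs z ^+ k.
Proof.
move=> /allP s1; apply: le_trans; first exact: cabs_sum.
rewrite [leRHS](reindex_inj rev_ord_inj); apply: ler_sum => k _ /=.
rewrite cabsM cabsX cabs_int ler_piMl ?exprn_ge0 ?cabs_ge0 //.
by rewrite lerz1 s1 // mem_nth.
Qed.

Definition bits (a : seq bool) : seq int := [seq (nat_of_bool t)%:Z | t <- a].

Definition bit_diff n (P : n.-tuple bool * n.-tuple bool) : seq int :=
  [seq (nat_of_bool t.1)%:Z - (nat_of_bool t.2)%:Z | t <- zip P.1 P.2].

Lemma size_bit_diff n (P : n.-tuple bool * n.-tuple bool) : size (bit_diff P) = n.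
Proof. by rewrite size_map size_zip !size_tuple minnn. Qed.

Lemma bit_diff_digits n (P : n.-tuple bool * n.-tuple bool) :
  all (fun a => a \in [:: -1; 0; 1]) (bit_diff P).
Proof. by apply/allP => _ /mapP [[[] []] _ ->]. Qed.

Lemma bit_diff_norm_le1 n (P : n.-tuple bool * n.-tuple bool) :
  all (fun a : int => `|a| <= 1) (bit_diff P).
Proof. by apply/allP => _ /mapP [[[] []] _ ->]. Qed.

Lemma bits_norm_le1 (a : seq bool) : all (fun a : int => `|a| <= 1) (bits a).
Proof. by apply/allP => _ /mapP [[] _ ->]. Qed.

Lemma bit_diff_cat m n (Q : m.-tuple bool * m.-tuple bool)
    (P : n.-tuple bool * n.-tuple bool) :
  bit_diff (cat_tuple Q.1 P.1, cat_tuple Q.2 P.2) = bit_diff Q ++ bit_diff P.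
Proof. by rewrite /bit_diff /= zip_cat ?size_tuple // map_cat. Qed.

Lemma digits_eval_bit_diff n (P : n.-tuple bool * n.-tuple bool) (z : R[i]) :
  digits_eval (bit_diff P) z = digits_eval (bits P.1) z - digits_eval (bits P.2) z.
Proof.
rewrite /digits_eval size_bit_diff !size_map !size_tuple -sumrB.
apply: eq_bigr => k _; rewrite -mulrBl -intrB.
rewrite !(nth_map (false, false)) ?(nth_map false) ?size_zip ?size_tuple ?minnn //.
by rewrite nth_zip ?size_tuple.
Qed.

End DigitsEval.

Section Multiplicity.
Variables (R : realType) (N : nat) (b : 'I_N -> R[i]).

Lemma cat_tuple_inj m n (s1 s2 : m.-tuple bool) (t1 t2 : n.-tuple bool) :
  val s1 ++ val t1 = val s2 ++ val t2 -> s1 = s2 /\ t1 = t2.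
Proof.
move=> e; split; apply: val_inj.
  by have := congr1 (take m) e; rewrite !take_size_cat ?size_tuple.
by have := congr1 (drop m) e; rewrite !drop_size_cat ?size_tuple.
Qed.

Lemma muE n x :
  mu b n x = #|[set P : n.-tuple bool * n.-tuple bool | digit_vec b (bit_diff P) == x]|.
Proof. by []. Qed.

Lemma mu_supermul m n x : (mu b m 0%R * mu b n x <= mu b (m + n) x)%N.
Proof.
rewrite !muE -cardsX.
pose cat2 (QP : (m.-tuple bool * m.-tuple bool) * (n.-tuple bool * n.-tuple bool)) :=
  (cat_tuple QP.1.1 QP.2.1, cat_tuple QP.1.2 QP.2.2).
have cat2_inj : injective cat2.
  by move=> [[? ?] [? ?]] [[? ?] [? ?]] [] /cat_tuple_inj [-> ->] /cat_tuple_inj [-> ->].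
rewrite -(card_imset _ cat2_inj); apply/subset_leq_card/fintype.subsetP => y.
case/imsetP=> -[Q P]; rewrite !inE /= => /andP [/eqP Q0 /eqP <-] ->.
apply/eqP/ffunP => j; rewrite (bit_diff_cat Q P) !digit_vecE digits_eval_cat.
by rewrite -digit_vecE Q0 ffunE mul0r add0r.
Qed.

Local Open Scope classical_set_scope.

Lemma mu_lim_ge (lam : R) (f : Kpt R N -> R) n x : 0 < lam ->
  (fun n => lam ^- n * (mu b n x)%:R) @ \oo --> f x ->
  (fun n => lam ^- n * (mu b n 0)%:R) @ \oo --> f 0 ->
  lam ^- n * (mu b n x)%:R * f 0 <= f x.
Proof.
move=> lam0 cvgx cvg0.
have {}cvgx : (fun m => lam ^- (m + n) * (mu b (m + n) x)%:R) @ \oo --> f x.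
  by rewrite (cvg_shiftn n (fun m => lam ^- m * (mu b m x)%:R)).
have cvgM0 : (fun m => lam ^- n * (mu b n x)%:R * (lam ^- m * (mu b m 0)%:R))
    @ \oo --> lam ^- n * (mu b n x)%:R * f 0.
  by apply: cvgM => //; exact: cvg_cst.
apply: (ler_cvg_to cvgM0 cvgx); near=> m => /=.
have := mu_supermul m n x; rewrite -(ler_nat R) natrM => le_mu.
rewrite exprD invfM [leLHS](_ : _ = lam ^- m * lam ^- n * ((mu b m 0)%:R * (mu b n x)%:R)).
  by rewrite ler_wpM2l // mulr_ge0 // invr_ge0 exprn_ge0 // ltW.
by ring.
Unshelve. all: by end_near.
Qed.

End Multiplicity.

Lemma sqr_sum_le_card_mul_sum_sqr (R : realFieldType) (U : finType) (x : U -> R) :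
  (\sum_u x u) ^+ 2 <= #|U|%:R * \sum_u x u ^+ 2.
Proof.
have AMGM u v : x u * x v *+ 2 <= x u ^+ 2 + x v ^+ 2.
  by rewrite -subr_ge0 addrAC -sqrrB sqr_ge0.
rewrite -(ler_pMn2r (n := 2)) // expr2 mulr_suml -sumrMnl.
under eq_bigr do rewrite mulr_sumr -sumrMnl.
apply: le_trans (ler_sum _ (fun u _ => ler_sum _ (fun v _ => AMGM u v))) _.
under eq_bigr do rewrite big_split /= sumr_const.
by rewrite big_split /= sumr_const sumrMnl mulr2n mulr_natl.
Qed.

Lemma sqr_card_le_card_mul_card_fiber_pairs (T U : finType) (g : T -> U) :
  (#|T| ^ 2 <= #|U| * #|[set p : T * T | g p.1 == g p.2]|)%N.
Proof.
pose c u := #|[set t | g t == u]|.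
have cardT : #|T| = (\sum_u c u)%N.
  rewrite -sum1_card (partition_big g xpredT) //=; apply: eq_bigr => u _.
  by rewrite /c -sum1_card; apply: eq_bigl => t; rewrite inE.
have cardP : #|[set p : T * T | g p.1 == g p.2]| = (\sum_u c u ^ 2)%N.
  rewrite -sum1_card (partition_big (fun p : T * T => g p.1) xpredT) //=.
  apply: eq_bigr => u _; rewrite /c expnS expn1 -cardsX -sum1_card.
  apply: eq_bigl => -[t1 t2].
  by rewrite !inE /=; apply/andP/andP => -[/eqP -> /eqP ->].
rewrite cardT cardP -(ler_nat rat) natrM !natrX !natr_sum.
under [X in _ <= _ * X]eq_bigr do rewrite natrX.
exact: sqr_sum_le_card_mul_sum_sqr.
Qed.

Section ReImCoordinate.
Variable R : realType.
Implicit Types (z w beta : R[i]).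

(* At a conjugate pair beta, beta^* the cells record Re at one member and Im at
   the other: one real coordinate per conjugate keeps the number of cells of
   order |beta|^n, yet controls the whole complex difference. *)
Definition reim_coord beta w : R :=
  if 0 <= complex.Im beta then complex.Re w else complex.Im w.

Lemma reim_coordB beta z w :
  reim_coord beta (z - w) = reim_coord beta z - reim_coord beta w.
Proof. by rewrite /reim_coord; case: ifP; case: z; case: w. Qed.

Lemma norm_reim_coord_le beta w : `|reim_coord beta w| <= cabs w.
Proof.
rewrite /reim_coord cabs_def; case: ifP => _; rewrite -sqrtr_sqr ler_wsqrtr //.
  by rewrite lerDl sqr_ge0.
by rewrite lerDr sqr_ge0.
Qed.

Lemma ReIm_lt_of_reim_coord_lt (s : seq int) beta (e : R) : 0 < e ->
  `|reim_coord beta (digits_eval s beta)| < e ->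
  `|reim_coord (beta^*)%C (digits_eval s (beta^*)%C)| < e ->
  `|complex.Re (digits_eval s beta)| < e /\ `|complex.Im (digits_eval s beta)| < e.
Proof.
rewrite digits_eval_conj /reim_coord; case: beta => x y /= e0.
case: (ltrgt0P y) => [y0|y0|->].
- rewrite oppr_ge0 leNgt y0 /=.
  by case: (digits_eval _ _) => u v /=; rewrite normrN.
- rewrite oppr_ge0 (ltW y0) /=.
  by case: (digits_eval _ _) => u v /=.
- rewrite oppr0 lexx => ltRe _; split=> //.
  have real_eval : ((digits_eval s (x +i* 0)%C)^*)%C = digits_eval s (x +i* 0)%C.
    by rewrite -digits_eval_conj /= oppr0.
  by rewrite (Im_eq0_conj real_eval) normr0.
Qed.

End ReImCoordinate.

Lemma floor_eq_dist_lt1 (R : realType) (x y : R) :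
  Num.floor x = Num.floor y -> `|x - y| < 1.
Proof.
move=> e; have := floor_itv x; have := floor_itv y; rewrite e intrD.
by move=> /andP [? ?] /andP [? ?]; rewrite ltr_norml; apply/andP; split; lra.
Qed.

Lemma sum_geom_le (R : realFieldType) (x : R) n :
  1 < x -> \sum_(k < n) x ^+ k <= x ^+ n / (x - 1).
Proof. by move=> x1; rewrite ler_pdivlMr ?subr_gt0 // mulrC -subrX1 lerBlDr lerDl. Qed.

Section Cells.
Variables (R : realType) (N : nat) (b : 'I_N -> R[i]) (d n : nat).
Hypothesis expanding : forall j : 'I_N, (j < d)%N -> 1 < cabs (b j).
Implicit Types (j : 'I_N) (a : n.-tuple bool).

(* Halved because |w| <= |Re w| + |Im w|. *)
Definition cell_size (j : 'I_N) : R := Ibound (b j) / 2.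

Definition cell_radius (j : 'I_N) : int :=
  Num.floor ((\sum_(k < n) cabs (b j) ^+ k) / cell_size j).

Definition cell_coord (j : 'I_N) (a : n.-tuple bool) : int :=
  Num.floor (reim_coord (b j) (digits_eval (bits a) (b j)) / cell_size j)
    + cell_radius j + 1.

(* The coordinates j >= d are not constrained by S and get a single cell. *)
Definition cell_width (j : 'I_N) : nat :=
  if (j < d)%N then (`|cell_radius j|%N).*2.+1 else 0.

Definition cell (a : n.-tuple bool) : {dffun forall j : 'I_N, 'I_(cell_width j).+1} :=
  [ffun j => inord `|cell_coord j a|%N].

Lemma cell_size_gt0 (j : 'I_N) : (j < d)%N -> 0 < cell_size j.
Proof. by move=> jd; rewrite divr_gt0 // Ibound_gt0 // expanding. Qed.

Lemma cell_radius_ge0 (j : 'I_N) : (j < d)%N -> 0 <= cell_radius j.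
Proof.
move=> jd; rewrite /cell_radius floor_ge0 divr_ge0 ?(ltW (cell_size_gt0 jd)) //.
by apply: sumr_ge0 => k _; rewrite exprn_ge0 ?cabs_ge0.
Qed.

Lemma cell_ratio_bound (j : 'I_N) a : (j < d)%N ->
  `|reim_coord (b j) (digits_eval (bits a) (b j)) / cell_size j|
    <= (\sum_(k < n) cabs (b j) ^+ k) / cell_size j.
Proof.
move=> jd; have del0 := cell_size_gt0 jd.
rewrite normrM normfV (gtr0_norm del0) ler_pM2r ?invr_gt0 //.
apply: le_trans (norm_reim_coord_le _ _) _.
apply: le_trans (cabs_digits_eval_le _ (bits_norm_le1 _)) _.
by rewrite size_map size_tuple.
Qed.

Lemma cell_coord_range (j : 'I_N) a :
  (j < d)%N -> 0 <= cell_coord j a <= cell_radius j * 2 + 1.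
Proof.
move=> jd; have := cell_ratio_bound a jd; rewrite /cell_coord /cell_radius.
set t := _ / _; set B := _ / _; rewrite ler_norml => /andP [lo hi].
have up := le_floor hi; have lo' : (- Num.floor B - 2)%:~R < (Num.floor t)%:~R :> R.
  have := floorD1_gt B; have := floorD1_gt t; rewrite !intrD !intrN; lra.
rewrite ltr_int in lo'; apply/andP; split; lia.
Qed.

Lemma cell_eq_coord_eq a a' j :
  cell a = cell a' -> (j < d)%N -> cell_coord j a = cell_coord j a'.
Proof.
move=> ceq jd.
have := congr1 (fun c : {dffun forall j, 'I_(cell_width j).+1} => val (c j)) ceq.
have /andP [ge0 le] := cell_coord_range a jd.
have /andP [ge0' le'] := cell_coord_range a' jd.
have r0 := cell_radius_ge0 jd.
rewrite /= !ffunE /= !inordK /cell_width ?jd; lia.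
Qed.

Lemma cell_eq_reim_coord_lt a a' j : cell a = cell a' -> (j < d)%N ->
  `|reim_coord (b j) (digits_eval (bit_diff (a, a')) (b j))| < cell_size j.
Proof.
move=> ceq jd; have del0 := cell_size_gt0 jd.
move: (cell_eq_coord_eq ceq jd); rewrite /cell_coord => /addIr /addIr /floor_eq_dist_lt1.
rewrite digits_eval_bit_diff reim_coordB -mulrBl normrM normfV (gtr0_norm del0).
by rewrite ltr_pdivrMr // mul1r.
Qed.

Hypothesis conj_partner : forall j, (j < d)%N ->
  exists2 j' : 'I_N, (j' < d)%N & b j' = ((b j)^*)%C.

Lemma inS_of_cell_eq a a' :
  cell a = cell a' -> inS b d (digit_vec b (bit_diff (a, a'))).
Proof.
move=> ceq j jd; rewrite digit_vecE; have [j' j'd bj'] := conj_partner jd.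
have lt_conj := cell_eq_reim_coord_lt ceq j'd.
rewrite /cell_size bj' Ibound_conj -/(cell_size j) in lt_conj.
have [ltRe ltIm] :=
  ReIm_lt_of_reim_coord_lt (cell_size_gt0 jd) (cell_eq_reim_coord_lt ceq jd) lt_conj.
apply: le_trans (cabs_le_ReIm _) _; apply: ltW; apply: lt_le_trans (ltrD ltRe ltIm) _.
by rewrite /cell_size -splitr.
Qed.

Definition good_pairs : {set n.-tuple bool * n.-tuple bool} :=
  [set P | `[< inS b d (digit_vec b (bit_diff P)) >]].

Lemma card_cells :
  #|{dffun forall j, 'I_(cell_width j).+1}|
    = (\prod_(j < N | (j < d)%N) (cell_width j).+1)%N.
Proof.
rewrite card_dep_ffun foldrE big_map big_enum [RHS]big_mkcond /=.
by apply: eq_bigr => j _; rewrite card_ord /cell_width; case: ifP.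
Qed.

Lemma sqr_card_tuples_le :
  ((2 ^ n) ^ 2 <= (\prod_(j < N | (j < d)%N) (cell_width j).+1) * #|good_pairs|)%N.
Proof.
have := sqr_card_le_card_mul_card_fiber_pairs cell.
rewrite card_tuple card_bool card_cells => /leq_trans; apply.
rewrite leq_mul2l; apply/orP; right; apply/subset_leq_card/fintype.subsetP.
by move=> [a a']; rewrite !inE => /eqP /inS_of_cell_eq.
Qed.

Definition cell_count_const j : R := 2 / (cell_size j * (cabs (b j) - 1)) + 2.

Lemma cell_count_const_gt0 j : (j < d)%N -> 0 < cell_count_const j.
Proof.
by move=> jd; rewrite addr_gt0 // divr_gt0 // mulr_gt0 ?cell_size_gt0 // subr_gt0 expanding.
Qed.

Lemma cell_width_le j : (j < d)%N ->
  ((cell_width j).+1)%:R <= cell_count_const j * cabs (b j) ^+ n.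
Proof.
move=> jd; have del0 := cell_size_gt0 jd; have b1 := expanding jd.
have c0 : 0 < cabs (b j) - 1 by rewrite subr_gt0.
rewrite /cell_count_const; set X := cabs (b j) ^+ n; set c := cabs (b j) - 1.
set q := X / (cell_size j * c).
have X1 : 1 <= X by rewrite exprn_ege1 // ltW.
have r_le : (cell_radius j)%:~R <= q.
  apply: le_trans (floor_le _) _; rewrite ler_pdivrMr // /q.
  rewrite [_ * cell_size j](_ : _ = X / c); first exact: sum_geom_le.
  by field; rewrite !gt_eqF.
have -> : (2 / (cell_size j * c) + 2) * X = 2 * q + 2 * X.
  by rewrite /q; field; rewrite !gt_eqF.
rewrite /cell_width jd -addn2 -muln2 natrD natrM natr_absz ger0_norm ?cell_radius_ge0 //.
lra.
Qed.

Lemma card_good_pairs_ge :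
  4 ^+ n <= (\prod_(j < N | (j < d)%N) cell_count_const j) *
    (\prod_(j < N | (j < d)%N) cabs (b j)) ^+ n * #|good_pairs|%:R.
Proof.
have := sqr_card_tuples_le; rewrite -expnM mulnC expnM -(ler_nat R) natrM natrX.
move=> /le_trans; apply; rewrite ler_wpM2r // natr_prod -prodrXl -big_split /=.
by apply: ler_prod => j jd; rewrite ler0n cell_width_le.
Qed.

End Cells.

Lemma card_le_sum_fibers (T : finType) (K : eqType) (g : T -> K) (G : {set T}) :
  (#|G| <= \sum_(x <- undup [seq g P | P <- enum G]) #|[set P | g P == x]|)%N.
Proof.
rewrite -sum1_card big_mkcond /=.
under [X in (_ <= X)%N]eq_bigr => x _ do rewrite -sum1_card big_mkcond /=.
rewrite exchange_big /=; apply: leq_sum => P _; case: ifP => // PG.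
rewrite (bigD1_seq (g P)) ?undup_uniq ?eqxx //=.
  by rewrite inE eqxx.
by rewrite mem_undup map_f // mem_enum.
Qed.

Local Open Scope classical_set_scope.

Lemma esum_ge_sum_seq (R : realType) (T : choiceType) (D : set T) (U : seq T)
    (h : T -> R) :
  uniq U -> (forall x, x \in U -> D x) ->
  ((\sum_(x <- U) h x)%:E <= \esum_(x in D) (h x)%:E)%E.
Proof.
move=> uU UD; apply: esum_ge; exists [set` U].
  by split; [exact: finite_seq | move=> x /= /UD].
by rewrite -fsbig_seq // sumEFin.
Qed.

Section MeasureOfR.
Variables (R : realType) (N : nat) (b : 'I_N -> R[i]) (d : nat) (fr : 'I_N).
Variables (lam : R) (f : Kpt R N -> R).
Hypothesis expanding : forall j : 'I_N, (j < d)%N -> 1 < cabs (b j).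
Hypothesis lam_gt0 : 0 < lam.
Hypothesis f0_ge0 : 0 <= f 0.
Hypothesis cvg_mu :
  forall x, inX b d x -> (fun n => lam ^- n * (mu b n x)%:R) @ \oo --> f x.

Lemma inX0 : inX b d 0.
Proof.
split; first by exists [::]; split => //; apply/ffunP => j; rewrite !ffunE big_ord0.
move=> j jd; rewrite ffunE (_ : 0 = 0%:~R) // cabs_int normr0.
exact/ltW/Ibound_gt0/expanding.
Qed.

Lemma good_pair_in_Rset n (P : n.-tuple bool * n.-tuple bool) :
  P \in good_pairs b d n -> Rset b d fr n (digit_vec b (bit_diff P)).
Proof.
rewrite inE => /asboolP PS; split.
  by split => //; exists (bit_diff P); rewrite bit_diff_digits.
rewrite digit_vecE; apply: le_trans (cabs_digits_eval_le _ (bit_diff_norm_le1 P)) _.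
by rewrite size_bit_diff.
Qed.

Lemma esum_Rset_ge n :
  ((lam ^- n * f 0 * #|good_pairs b d n|%:R)%:E
     <= \esum_(x in Rset b d fr n) (f x)%:E)%E.
Proof.
set U := undup [seq digit_vec b (bit_diff P) | P <- enum (good_pairs b d n)].
have UR : forall x, x \in U -> Rset b d fr n x.
  by move=> x; rewrite mem_undup => /mapP [P + ->]; rewrite mem_enum => /good_pair_in_Rset.
apply: le_trans (esum_ge_sum_seq _ (undup_uniq _) UR); rewrite lee_fin.
apply: le_trans (_ : lam ^- n * f 0 * (\sum_(x <- U) mu b n x)%:R <= _).
  by rewrite ler_wpM2l ?ler_nat ?card_le_sum_fibers // mulr_ge0 ?invr_ge0 ?exprn_ge0 // ltW.
rewrite natr_sum mulr_sumr big_seq [leRHS]big_seq; apply: ler_sum => x /UR [Xx _].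
by rewrite mulrAC; apply: mu_lim_ge => //; apply: cvg_mu; last exact: inX0.
Qed.

End MeasureOfR.

Lemma expanding_conj_partner (R : realType) (d s : nat) (b : 'I_(d + s).+1 -> R[i])
    (p : {poly rat}) :
  (forall z : R[i], root (map_poly ratr p) z <-> exists j, b j = z) ->
  injective b ->
  (forall j : 'I_(d + s).+1, (d <= j < d + s)%N -> cabs (b j) < 1) ->
  complex.Im (b ord_max) = 0 ->
  (forall j : 'I_(d + s).+1, (j < d)%N -> 1 < cabs (b j)) ->
  forall j : 'I_(d + s).+1, (j < d)%N ->
    exists2 j' : 'I_(d + s).+1, (j' < d)%N & b j' = ((b j)^*)%C.
Proof.
move=> roots b_inj contracting free_real expanding j jd.
have : root (map_poly ratr p) ((b j)^*)%C.
  rewrite -complex_root_conj -map_poly_comp (eq_map_poly (g := ratr)) ?(roots _).2 //.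
    by exists j.
  by move=> a /=; rewrite fmorph_rat.
move=> /(roots _).1 [j' bj']; exists j' => //.
have bj'1 : 1 < cabs (b j') by rewrite bj' cabs_conj expanding.
case: (ltnP j' d) => // dj'; case: (ltnP j' (d + s)) => j's.
  by have := contracting j' (introT andP (conj dj' j's)); rewrite ltNge (ltW bj'1).
have j'max : j' = ord_max by apply: val_inj => /=; have := ltn_ord j'; lia.
have : b j = b ord_max.
  rewrite -[b j]conjcK -bj' j'max; move: free_real.
  by case: (b ord_max) => x y /= ->; rewrite oppr0.
by move/b_inj => jmax; move: jd; rewrite jmax /=; lia.
Qed.

Local Open Scope ring_scope.

Theorem lemma4p2 (R : realType) (beta : R) (d s : nat)
  (b : 'I_(d + s).+1 -> R[i]) (p : {poly rat}) (lam : R)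
  (f : Kpt R (d + s).+1 -> R) :
  1 < beta < 2 ->
  (exists q : {poly int}, q \is monic /\ root (map_poly intr q) (beta%:C)%C) ->
  p \is monic -> irreducible_poly p -> root (map_poly ratr p) (beta%:C)%C ->
  (forall z : R[i], root (map_poly ratr p) z <-> exists j, b j = z) ->
  injective b ->
  b ord0 = (beta%:C)%C ->
  (forall j, cabs (b j) != 1) ->
  (0 < d)%N ->
  (forall j : 'I_(d + s).+1, (j < d)%N -> 1 < cabs (b j)) ->
  (forall j : 'I_(d + s).+1, (d <= j < d + s)%N -> cabs (b j) < 1) ->
  complex.Im (b ord_max) = 0 -> 1 < cabs (b ord_max) ->
  1 < lam ->
  (forall x, inX b d x ->
     0 < f x <= f 0 /\
     (fun n : nat => lam ^- n * (mu b n x)%:R) @ \oo --> f x) ->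
  lam < 4 / cabs (\prod_(j < (d + s).+1 | (j < d)%N) b j) ->
  exists c rho : R, 0 < c /\ 1 < rho /\
    forall n : nat,
      ((c * rho ^+ n)%:E <= \esum_(x in Rset b d ord_max n) (f x)%:E)%E.
Proof.
move=> _ _ _ _ _ roots b_inj _ _ _ expanding contracting free_real _ lam1 hf.
have conj_partner := expanding_conj_partner roots b_inj contracting free_real expanding.
have lam0 : 0 < lam by apply: lt_trans lam1.
have [/andP [f0_gt0 _] _] := hf 0 (inX0 expanding).
set C := \prod_(j < (d + s).+1 | (j < d)%N) cell_count_const b j.
set K := \prod_(j < (d + s).+1 | (j < d)%N) cabs (b j).
have C0 : 0 < C by apply: prodr_gt0 => j /cell_count_const_gt0; apply.
have K0 : 0 < K by apply: prodr_gt0 => j /expanding; apply: lt_trans.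
rewrite cabs_prod -/K ltr_pdivlMr // => lamK4.
exists (f 0 / C), (4 / (lam * K)); split; first by rewrite divr_gt0.
split; first by rewrite ltr_pdivlMr ?mulr_gt0 ?mul1r.
move=> n; apply: le_trans (esum_Rset_ge ord_max expanding lam0 (ltW f0_gt0)
  (fun x Xx => (hf x Xx).2) n); rewrite lee_fin.
have := card_good_pairs_ge n expanding conj_partner; rewrite -/C -/K => card_ge.
have -> : f 0 / C * (4 / (lam * K)) ^+ n = lam ^- n * f 0 * (4 ^+ n / (C * K ^+ n)).
  by rewrite expr_div_n exprMn; field; rewrite !gt_eqF ?exprn_gt0.
rewrite ler_wpM2l ?mulr_ge0 ?invr_ge0 ?exprn_ge0 ?(ltW lam0) ?(ltW f0_gt0) //.
by rewrite ler_pdivrMr ?mulr_gt0 ?exprn_gt0 // mulrC.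
Qed.
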